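(* Let $\pi_\xi(a_t\mid s_t,s_{t+k})$ be a family of conditional densities with scalar parameter $\xi$, let $p^\star(s_{t+k}\mid s_t)$ be a fixed (parameter-independent) conditional density and $p(s_t)$ a density of states, and define the marginal policy $$\pi_{\mu(\xi)}(a_t\mid s_t)=\int p^\star(s_{t+k}\mid s_t)\,\pi_\xi(a_t\mid s_t,s_{t+k})\,ds_{t+k}.$$ Let $$F_\mu=\mathbb{E}\Big[\Big(\tfrac{\partial}{\partial\xi}\ln\pi_{\mu(\xi)}(\mathbf{a}_t\mid\mathbf{s}_t)\Big)^2\Big],\qquad F_\xi=\mathbb{E}\Big[\Big(\tfrac{\partial}{\partial\xi}\ln\pi_\xi(\mathbf{a}_t\mid\mathbf{s}_t,\mathbf{s}_{t+k})\Big)^2\Big],$$ where $\mathbf{s}_t\sim p$, $\mathbf{s}_{t+k}\sim p^\star(\cdot\mid\mathbf{s}_t)$, $\mathbf{a}_t\sim\pi_\xi(\cdot\mid\mathbf{s}_t,\mathbf{s}_{t+k})$. Assume $F_\mu$ and $F_\xi$ exist and that regularity conditions permitting differentiation with respect to $\xi$ under the integral sign hold. Then $F_\xi/F_\mu\ge 1$.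
   Context: Here $\pi_{\mu(\xi)}$ is the behavior-cloning policy obtained by marginalizing the inverse dynamics policy $\pi_\xi$ over the true future-state distribution $p^\star$, so that its parameter is regarded as a function of $\xi$; $F_\mu$ and $F_\xi$ are the Fisher informations of the BC and IDM policies with respect to $\xi$. *)

From HB Require Import structures.
From mathcomp Require Import all_boot all_order all_algebra.
From mathcomp Require Import all_classical all_reals all_analysis.
Set Implicit Arguments.
Unset Strict Implicit.
Unset Printing Implicit Defensive.
Import Order.TTheory GRing.Theory Num.Theory.
Import numFieldNormedType.Exports.
Local Open Scope classical_set_scope.
Local Open Scope ring_scope.

Definition bc_policy (R : realType) (dS : measure_display) (S : measurableType dS)
  (A : Type) (muS : {measure set S -> \bar R})
  (pstar : S -> S -> R) (pi : R -> S -> S -> A -> R) (x : R) (s : S) (a : A) : R :=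
  fine (\int[muS]_s' (pstar s s' * pi x s s' a)%:E).

Definition fisher_idm (R : realType) (dS dA : measure_display)
  (S : measurableType dS) (A : measurableType dA)
  (muS : {measure set S -> \bar R}) (muA : {measure set A -> \bar R})
  (p : S -> R) (pstar : S -> S -> R) (pi : R -> S -> S -> A -> R) (xi0 : R) : \bar R :=
  \int[muS]_s ((p s)%:E *
    \int[muS]_s' ((pstar s s')%:E *
      \int[muA]_a (pi xi0 s s' a *
                   ((derive1 (fun x => ln (pi x s s' a))) xi0) ^+ 2)%:E)).

(* F_mu = E_{s ~ p, a ~ pi_mu(xi0)(.|s)} [(d/dxi ln pi_mu(xi)(a|s))^2]
   (the law of (s_t, a_t) under the sampling scheme s ~ p, s' ~ p*, a ~ pi_xi
    has density p(s) pi_mu(xi0)(a|s)). *)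
Definition fisher_bc (R : realType) (dS dA : measure_display)
  (S : measurableType dS) (A : measurableType dA)
  (muS : {measure set S -> \bar R}) (muA : {measure set A -> \bar R})
  (p : S -> R) (pstar : S -> S -> R) (pi : R -> S -> S -> A -> R) (xi0 : R) : \bar R :=
  \int[muS]_s ((p s)%:E *
    \int[muA]_a (bc_policy muS pstar pi xi0 s a *
                 ((derive1 (fun x => ln (bc_policy muS pstar pi x s a))) xi0) ^+ 2)%:E).

(** Write [pi_mu = \int p* pi_xi ds'] and, differentiating under the integral,
    [d pi_mu = \int p* (d pi_xi) ds']. Cauchy-Schwarz for the measure
    [p* pi_xi ds'] gives, for every state [s] and action [a],
    [(d pi_mu)^2 / pi_mu <= \int p* (d pi_xi)^2 / pi_xi ds'],
    and [(d pi)^2 / pi = pi (d ln pi)^2] is the Fisher density of either policy.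
    Integrating over [a] (Tonelli) and then over [s] gives [F_mu <= F_xi]. *)

From HB Require Import structures.
From mathcomp Require Import all_boot all_order all_algebra.
From mathcomp Require Import all_classical all_reals all_analysis measurable_realfun.
From mathcomp Require Import ring.
Set Implicit Arguments.
Unset Strict Implicit.
Unset Printing Implicit Defensive.
Import Order.TTheory GRing.Theory Num.Theory.
Import numFieldNormedType.Exports.
Local Open Scope classical_set_scope.
Local Open Scope ring_scope.

Lemma derive1_ln (R : realType) (f : R -> R) x :
  derivable f x 1 -> 0 < f x ->
  derive1 (fun y => ln (f y)) x = derive1 f x / f x.
Proof.
move=> df fx_gt0.
have -> : (fun y => ln (f y)) = (@ln R) \o f by [].
rewrite derive1_comp //; last exact/ex_derive/is_derive1_ln.
have ln_derivable := is_derive1_ln fx_gt0.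
by rewrite derive1E derive_val mulrC.
Qed.

(* At [f x = 0] both sides vanish, the right one because [y / 0 = 0]. *)
Lemma mul_sqr_derive1_ln (R : realType) (f : R -> R) x :
  derivable f x 1 -> 0 <= f x ->
  f x * derive1 (fun y => ln (f y)) x ^+ 2 = derive1 f x ^+ 2 / f x.
Proof.
move=> df; rewrite le_eqVlt => /orP[/eqP <-|fx_gt0]; first by rewrite mul0r invr0 mulr0.
by rewrite derive1_ln //; field; rewrite gt_eqF.
Qed.

Lemma tangent_le_sqr_div (R : realFieldType) (w q f c : R) : 0 <= w -> 0 < q ->
  2 * c * (w * f) - c ^+ 2 * (w * q) <= w * (f ^+ 2 / q).
Proof.
move=> w_ge0 q_gt0; rewrite -subr_ge0.
have -> : w * (f ^+ 2 / q) - (2 * c * (w * f) - c ^+ 2 * (w * q))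
    = w * ((f - c * q) ^+ 2 / q) by field; rewrite gt_eqF.
by rewrite mulr_ge0 // divr_ge0 ?sqr_ge0 // ltW.
Qed.

Lemma measurable_funV_gt0 d (T : measurableType d) (R : realType) (f : T -> R) :
  measurable_fun setT f -> (forall t, 0 < f t) ->
  measurable_fun setT (fun t => (f t)^-1).
Proof.
move=> mf f_gt0.
have -> : (fun t => (f t)^-1) = (fun t => expR (- ln (f t))).
  by apply/funext => t; rewrite expRN lnK //; exact: f_gt0.
apply: measurableT_comp; first exact: measurable_expR.
exact/measurableT_comp/(measurableT_comp (@measurable_ln R) mf).
Qed.

(* No measurability is needed: the integral of a nonnegative function is a
   supremum over the simple functions below it. *)
Lemma ge0_le_integralT d (T : measurableType d) (R : realType)
  (mu : {measure set T -> \bar R}) (f g : T -> \bar R) :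
  (forall t, 0 <= f t)%E -> (forall t, f t <= g t)%E ->
  (\int[mu]_t f t <= \int[mu]_t g t)%E.
Proof.
move=> f_ge0 fg.
have g_ge0 t : (0 <= g t)%E by exact: le_trans (f_ge0 t) (fg t).
rewrite (ge0_integralTE mu f_ge0) (ge0_integralTE mu g_ge0).
apply: le_ereal_sup => _ [h /= hf <-]; exists h => //= t.
exact: le_trans (hf t) (fg t).
Qed.

Section tonelli_sigma_finite.
Context d1 d2 (T1 : measurableType d1) (T2 : measurableType d2) (R : realType).
Variables (m1 : {measure set T1 -> \bar R}) (m2 : {measure set T2 -> \bar R}).
Hypotheses (sf1 : sigma_finite setT m1) (sf2 : sigma_finite setT m2).

(* The library states Tonelli for measures carrying a sigma-finite structure;
   these aliases of [m1] and [m2] receive one built from [sf1] and [sf2]. *)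
Definition sigma_finite_m1 : set T1 -> \bar R := m1.
Definition sigma_finite_m2 : set T2 -> \bar R := m2.
HB.instance Definition _ := Measure.on sigma_finite_m1.
HB.instance Definition _ :=
  @Measure_isSigmaFinite.Build _ _ _ sigma_finite_m1 sf1.
HB.instance Definition _ := Measure.on sigma_finite_m2.
HB.instance Definition _ :=
  @Measure_isSigmaFinite.Build _ _ _ sigma_finite_m2 sf2.

Lemma fubini_tonelli_sigma_finite (f : T1 * T2 -> \bar R) :
  measurable_fun setT f -> (forall z, 0 <= f z)%E ->
  (\int[m1]_x \int[m2]_y f (x, y) = \int[m2]_y \int[m1]_x f (x, y))%E.
Proof.
exact: (@fubini_tonelli _ _ _ _ _
  [the sigma_finite_measure _ _ of sigma_finite_m1]
  [the sigma_finite_measure _ _ of sigma_finite_m2]).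
Qed.

End tonelli_sigma_finite.

Lemma le_sqr_integral_div d (T : measurableType d) (R : realType)
  (mu : {measure set T -> \bar R}) (w q f : T -> R) :
  measurable_fun setT w -> measurable_fun setT q -> measurable_fun setT f ->
  (forall t, 0 <= w t) -> (forall t, 0 < q t) ->
  mu.-integrable setT (fun t => (w t * q t)%:E) ->
  mu.-integrable setT (fun t => (w t * f t)%:E) ->
  ((fine (\int[mu]_t (w t * f t)%:E) ^+ 2 /
    fine (\int[mu]_t (w t * q t)%:E))%:E
    <= \int[mu]_t (w t * (f t ^+ 2 / q t))%:E)%E.
Proof.
move=> mw mq mf w_ge0 q_gt0 iwq iwf.
have g_ge0 t : 0 <= w t * (f t ^+ 2 / q t).
  by rewrite mulr_ge0 // divr_ge0 ?sqr_ge0 // ltW.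
have Bq : (\int[mu]_t (w t * q t)%:E)%E = (fine (\int[mu]_t (w t * q t)%:E))%:E.
  by rewrite fineK // (integrable_fin_num measurableT).
have Bf : (\int[mu]_t (w t * f t)%:E)%E = (fine (\int[mu]_t (w t * f t)%:E))%:E.
  by rewrite fineK // (integrable_fin_num measurableT).
move: Bq Bf; set B := fine _; set B' := fine _ => Bq Bf.
have [->|B_neq0] := eqVneq B 0.
  by rewrite invr0 mulr0; apply: integral_ge0 => t _; rewrite lee_fin.
set J := (\int[mu]_t _)%E.
have [->|J_neq_oo] := eqVneq J +oo%E; first by rewrite leey.
have iJ : mu.-integrable setT (fun t => (w t * (f t ^+ 2 / q t))%:E).
  apply/integrableP; split.
    apply/measurable_EFinP/measurable_funM => //.
    exact/measurable_funM/measurable_funV_gt0/q_gt0/mq/measurable_funX.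
  under eq_integral do rewrite gee0_abs ?lee_fin //.
  by rewrite -/J ltey.
(* Integrate the tangent bound with slope [c = B' / B]; its left side
   integrates to [2 c B' - c^2 B = B'^2 / B]. *)
set c := B' / B.
have i2cf := integrableZl measurableT (2 * c) iwf.
have ic2q := integrableZl measurableT (c ^+ 2) iwq.
have itangent : mu.-integrable setT
    (fun t => (2 * c * (w t * f t) - c ^+ 2 * (w t * q t))%:E).
  apply: (eq_integrable measurableT _ _ _ (integrableB measurableT i2cf ic2q)).
  by move=> t _ /=; rewrite EFinB !EFinM.
apply: le_trans (le_integral measurableT itangent iJ _); last first.
  by move=> t _; rewrite lee_fin tangent_le_sqr_div.
rewrite integralB_EFin //.
under eq_integral do rewrite EFinM.
under [X in (_ <= _ - X)%E]eq_integral do rewrite EFinM.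
rewrite !(integralZl measurableT) // Bq Bf -!EFinM -EFinB lee_fin.
by rewrite [leRHS](_ : _ = B' ^+ 2 / B) // /c; field.
Qed.

Lemma fine_div_ge1 (R : realType) (x y : \bar R) :
  (0 < x)%E -> (x <= y)%E -> (y < +oo)%E -> 1 <= fine y / fine x.
Proof.
move=> x_gt0 xy y_lty.
have x_fin : x \is a fin_num by rewrite ge0_fin_numE ?(le_lt_trans xy) // ltW.
have y_fin : y \is a fin_num by rewrite ge0_fin_numE // (le_trans (ltW x_gt0)).
rewrite ler_pdivlMr ?mul1r; first exact: fine_le.
by rewrite fine_gt0 // x_gt0 (le_lt_trans xy).
Qed.

Section bc_fisher_le_idm_fisher.
Context (R : realType) (dS dA : measure_display)
  (S : measurableType dS) (A : measurableType dA).
Variables (muS : {measure set S -> \bar R}) (muA : {measure set A -> \bar R}).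
Variables (pstar : S -> S -> R) (pi : R -> S -> S -> A -> R) (xi0 : R).

Local Notation bc := (bc_policy muS pstar pi).
Local Notation dpi s s' a := (derive1 (fun x => pi x s s' a) xi0).

Hypotheses (sfS : sigma_finite setT muS) (sfA : sigma_finite setT muA).
Hypothesis mpstar : measurable_fun setT (fun z : S * S => pstar z.1 z.2).
Hypothesis pstar_ge0 : forall s s', 0 <= pstar s s'.
Hypothesis mpi :
  measurable_fun setT (fun z : S * S * A => pi xi0 z.1.1 z.1.2 z.2).
Hypothesis pi_gt0 : forall s s' a, 0 < pi xi0 s s' a.
Hypothesis pi_derivable :
  forall s s' a, derivable (fun x => pi x s s' a) xi0 1.
Hypothesis mdpi : measurable_fun setT (fun z : S * S * A => dpi z.1.1 z.1.2 z.2).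
Hypothesis pstar_pi_integrable :
  forall s a, muS.-integrable setT (fun s' => (pstar s s' * pi xi0 s s' a)%:E).
Hypothesis pstar_dpi_integrable :
  forall s a, muS.-integrable setT (fun s' => (pstar s s' * dpi s s' a)%:E).
Hypothesis bc_derive : forall s a, derivable (fun x => bc x s a) xi0 1 /\
  derive1 (fun x => bc x s a) xi0 = fine (\int[muS]_s' (pstar s s' * dpi s s' a)%:E).

Lemma bc_policy_ge0 s a : 0 <= bc xi0 s a.
Proof. by apply/fine_ge0/integral_ge0 => s' _; rewrite lee_fin mulr_ge0 // ltW. Qed.

Lemma idm_score_density s s' a :
  pi xi0 s s' a * derive1 (fun x => ln (pi x s s' a)) xi0 ^+ 2
  = dpi s s' a ^+ 2 / pi xi0 s s' a.
Proof. by rewrite mul_sqr_derive1_ln // ltW. Qed.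

Lemma measurable_idm_score_density : measurable_fun setT
  (fun z : S * S * A => dpi z.1.1 z.1.2 z.2 ^+ 2 / pi xi0 z.1.1 z.1.2 z.2).
Proof.
by apply: measurable_funM; [exact: measurable_funX | exact: measurable_funV_gt0].
Qed.

Lemma bc_score_density_le s a :
  ((bc xi0 s a * derive1 (fun x => ln (bc x s a)) xi0 ^+ 2)%:E
   <= \int[muS]_s' (pstar s s' * (dpi s s' a ^+ 2 / pi xi0 s s' a))%:E)%E.
Proof.
have [bc_derivable bc_derive1] := bc_derive s a.
rewrite mul_sqr_derive1_ln ?bc_policy_ge0 // bc_derive1.
apply: le_sqr_integral_div => //.
- exact: (measurable_fun_pair2 s mpstar).
- exact: (measurable_fun_pair2 s (measurable_fun_pair1 a mpi)).
- exact: (measurable_fun_pair2 s (measurable_fun_pair1 a mdpi)).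
Qed.

Lemma bc_fisher_state_le s :
  (\int[muA]_a (bc xi0 s a * derive1 (fun x => ln (bc x s a)) xi0 ^+ 2)%:E
   <= \int[muS]_s' ((pstar s s')%:E *
        \int[muA]_a (pi xi0 s s' a *
                     derive1 (fun x => ln (pi x s s' a)) xi0 ^+ 2)%:E))%E.
Proof.
pose G (z : A * S) := (pstar s z.2 * (dpi s z.2 z.1 ^+ 2 / pi xi0 s z.2 z.1))%:E.
have G_ge0 z : (0 <= G z)%E.
  by rewrite lee_fin mulr_ge0 // divr_ge0 ?sqr_ge0 // ltW.
have mG : measurable_fun setT G.
  apply/measurable_EFinP/measurable_funM.
    exact: measurableT_comp mpstar
      (measurable_fun_pair (measurable_cst s) measurable_snd).
  exact: measurableT_comp measurable_idm_score_density (measurable_fun_pair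
    (measurable_fun_pair (measurable_cst s) measurable_snd) measurable_fst).
apply: le_trans (ge0_le_integralT _ _ (bc_score_density_le s)) _.
  by move=> a; rewrite lee_fin mulr_ge0 ?sqr_ge0 ?bc_policy_ge0.
rewrite le_eqVlt (fubini_tonelli_sigma_finite sfA sfS mG G_ge0).
apply/orP/or_introl/eqP/eq_integral => s' _.
under [in RHS]eq_integral do rewrite idm_score_density.
rewrite -ge0_integralZl_EFin //.
- by move=> a _; rewrite lee_fin divr_ge0 ?sqr_ge0 // ltW.
- exact/measurable_EFinP/(measurable_fun_pair2 (s, s') measurable_idm_score_density).
Qed.

Lemma fisher_bc_le_fisher_idm (p : S -> R) : (forall s, 0 <= p s) ->
  (fisher_bc muS muA p pstar pi xi0 <= fisher_idm muS muA p pstar pi xi0)%E.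
Proof.
move=> p_ge0; apply: ge0_le_integralT => s.
  apply: mule_ge0; first by rewrite lee_fin.
  by apply: integral_ge0 => a _; rewrite lee_fin mulr_ge0 ?sqr_ge0 ?bc_policy_ge0.
by rewrite lee_wpmul2l ?lee_fin ?bc_fisher_state_le.
Qed.

End bc_fisher_le_idm_fisher.

Theorem lemma2 (R : realType) (dS dA : measure_display)
  (S : measurableType dS) (A : measurableType dA)
  (muS : {measure set S -> \bar R}) (muA : {measure set A -> \bar R})
  (p : S -> R) (pstar : S -> S -> R) (pi : R -> S -> S -> A -> R) (xi0 : R) :
  (* reference measures *)
  sigma_finite setT muS -> sigma_finite setT muA ->
  (* p : density of states *)
  measurable_fun setT p -> (forall s, 0 <= p s) ->
  (\int[muS]_s (p s)%:E = 1)%E ->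
  (* p* : parameter-independent conditional density of s_{t+k} given s_t *)
  measurable_fun setT (fun z : S * S => pstar z.1 z.2) ->
  (forall s s', 0 <= pstar s s') ->
  (forall s, (\int[muS]_s' (pstar s s')%:E = 1)%E) ->
  (* pi_xi : family of conditional densities of a_t given (s_t, s_{t+k}) *)
  (forall x, measurable_fun setT (fun z : S * S * A => pi x z.1.1 z.1.2 z.2)) ->
  (forall x s s' a, 0 < pi x s s' a) ->
  (forall x s s', (\int[muA]_a (pi x s s' a)%:E = 1)%E) ->
  (* regularity: differentiability in xi at xi0 *)
  (forall s s' a, derivable (fun x => pi x s s' a) xi0 1) ->
  measurable_fun setT
    (fun z : S * S * A => (derive1 (fun x => pi x z.1.1 z.1.2 z.2)) xi0) ->
  (* regularity: the marginal integral exists, and may be differentiated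
     under the integral sign at xi0 *)
  (forall x s a, muS.-integrable setT (fun s' => (pstar s s' * pi x s s' a)%:E)) ->
  (forall s a, muS.-integrable setT
     (fun s' => (pstar s s' * (derive1 (fun x => pi x s s' a)) xi0)%:E)) ->
  (forall s a, derivable (fun x => bc_policy muS pstar pi x s a) xi0 1 /\
     (derive1 (fun x => bc_policy muS pstar pi x s a)) xi0 =
       fine (\int[muS]_s' (pstar s s' * (derive1 (fun x => pi x s s' a)) xi0)%:E)) ->
  (* F_mu and F_xi exist (are finite), and the ratio is meaningful *)
  (fisher_bc muS muA p pstar pi xi0 < +oo)%E ->
  (fisher_idm muS muA p pstar pi xi0 < +oo)%E ->
  (0 < fisher_bc muS muA p pstar pi xi0)%E ->
  1 <= fine (fisher_idm muS muA p pstar pi xi0) /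
       fine (fisher_bc muS muA p pstar pi xi0).
Proof.
move=> sfS sfA _ p_ge0 _ mpstar pstar_ge0 _ mpi pi_gt0 _ pi_derivable mdpi
  pstar_pi_integrable pstar_dpi_integrable bc_derive _ fisher_idm_lty fisher_bc_gt0.
apply: fine_div_ge1 fisher_bc_gt0 _ fisher_idm_lty.
exact: (fisher_bc_le_fisher_idm sfS sfA mpstar pstar_ge0 (mpi xi0) (pi_gt0 xi0)
  pi_derivable mdpi (pstar_pi_integrable xi0) pstar_dpi_integrable bc_derive p_ge0).
Qed.
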